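(* Let $\rho\in[0,1]$, let $U_0,U_1$ be random vectors in $\mathbb{R}^d$, let $\Pi\in\mathbb{R}^{d\times d}$ be positive semidefinite (i.e. $v^T\Pi v\ge0$ for all $v\in\mathbb{R}^d$), and let $\Phi:\mathbb{R}\to\mathbb{R}$ be convex and non-increasing. Assume the expectations below are finite for all $\theta$. Then the performative risk $$\mathrm{PR}(\theta)=\rho\,\mathbb{E}\big[\Phi(U_1^T\theta)\big]+(1-\rho)\,\mathbb{E}\big[\Phi\big(-(U_0+\Pi\theta)^T\theta\big)\big]$$ is a convex function of $\theta\in\mathbb{R}^d$.
   Context: This is the performative risk of a linear classifier $f_\theta(x)=x^T\theta$ with convex surrogate loss $\Phi$ in binary classification where $\mathbb{P}_\theta(Y=1)=\rho$ is fixed, class-1 covariates are distributed as $U_1$ (unaffected by the deployed model), and class-0 covariates are distributed as $U_0+\Pi\theta$ (a linear performative shift). Examples of admissible $\Phi$ include the hinge, logistic and exponential losses. *)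

From HB Require Import structures.
From mathcomp Require Import all_boot all_order all_algebra.
From mathcomp Require Import all_classical all_reals all_analysis.
Set Implicit Arguments. Unset Strict Implicit. Unset Printing Implicit Defensive.
Import Order.TTheory GRing.Theory Num.Theory.
Local Open Scope ring_scope.

Definition convex_real_fun {R : realType} (f : R -> R) : Prop :=
  forall x y t : R, 0 <= t -> t <= 1 ->
    f (t * x + (1 - t) * y) <= t * f x + (1 - t) * f y.

Definition convex_on_Rd {R : realType} (d : nat) (f : 'cV[R]_d -> R) : Prop :=
  forall x y : 'cV[R]_d, forall t : R, 0 <= t -> t <= 1 ->
    f (t *: x + (1 - t) *: y) <= t * f x + (1 - t) * f y.

Definition noninc_real_fun {R : realType} (f : R -> R) : Prop :=
  forall x y : R, x <= y -> f y <= f x.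

Definition psd {R : realType} (d : nat) (Pi : 'M[R]_d) : Prop :=
  forall v : 'cV[R]_d, 0 <= (v^T *m Pi *m v) 0 0.

Definition rvec {dT : measure_display} {T : measurableType dT} {R : realType}
  (P : probability T R) (d : nat) (U : 'I_d -> {RV P >-> R}) (w : T) : 'cV[R]_d :=
  \col_i (U i w).

Definition dotv {R : realType} (d : nat) (x y : 'cV[R]_d) : R := (x^T *m y) 0 0.

Definition PR {dT : measure_display} {T : measurableType dT} {R : realType}
  (P : probability T R) (d : nat) (rho : R) (Phi : R -> R)
  (U0 U1 : 'I_d -> {RV P >-> R}) (Pi : 'M[R]_d) (theta : 'cV[R]_d) : R :=
  rho * Rintegral P setT (fun w => Phi (dotv (rvec U1 w) theta))
  + (1 - rho) * Rintegral P setT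
      (fun w => Phi (- dotv (rvec U0 w + Pi *m theta) theta)).

(* Both integrands are a convex non-increasing [Phi] composed with a concave
   function of [theta]: [theta |-> U1^T theta] is linear, and
   [theta |-> -(U0 + Pi theta)^T theta] is linear minus the quadratic form of
   [Pi], which is convex because [Pi] is positive semidefinite.  Convexity
   survives integration against [P] and nonnegative combinations. *)
From HB Require Import structures.
From mathcomp Require Import all_boot all_order all_algebra.
From mathcomp Require Import all_classical all_reals all_analysis.
From mathcomp Require Import ring lra.
Import Order.TTheory GRing.Theory Num.Theory.
Local Open Scope ring_scope.

Definition concave_on_Rd {R : realType} {d : nat} (f : 'cV[R]_d -> R) : Prop :=
  forall x y : 'cV[R]_d, forall t : R, 0 <= t -> t <= 1 ->
    t * f x + (1 - t) * f y <= f (t *: x + (1 - t) *: y).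

Section InnerProduct.
Context {R : realType} {d : nat}.
Implicit Types (a b c u : 'cV[R]_d) (k : R).

Lemma dotvDl a b c : dotv (a + b) c = dotv a c + dotv b c.
Proof. by rewrite /dotv linearD /= mulmxDl mxE. Qed.

Lemma dotvZl k a c : dotv (k *: a) c = k * dotv a c.
Proof. by rewrite /dotv linearZ /= -scalemxAl mxE. Qed.

Lemma dotvDr a b c : dotv c (a + b) = dotv c a + dotv c b.
Proof. by rewrite /dotv mulmxDr mxE. Qed.

Lemma dotvZr k a c : dotv c (k *: a) = k * dotv c a.
Proof. by rewrite /dotv -scalemxAr mxE. Qed.

Lemma dotvNl a c : dotv (- a) c = - dotv a c.
Proof. by rewrite -scaleN1r dotvZl mulN1r. Qed.

Lemma dotvNr a c : dotv c (- a) = - dotv c a.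
Proof. by rewrite -scaleN1r dotvZr mulN1r. Qed.

Lemma psd_dotv_ge0 (Pi : 'M[R]_d) v : psd Pi -> 0 <= dotv (Pi *m v) v.
Proof.
move=> hPi; rewrite /dotv.
have -> : (Pi *m v)^T *m v = (v^T *m Pi *m v)^T by rewrite !trmx_mul trmxK mulmxA.
by rewrite mxE; exact: hPi.
Qed.

Lemma quad_form_convex_gap (Pi : 'M[R]_d) x y t :
  let q v := dotv (Pi *m v) v in
  t * q x + (1 - t) * q y - q (t *: x + (1 - t) *: y) = t * (1 - t) * q (x - y).
Proof.
rewrite /= mulmxBr mulmxDr -!scalemxAr.
rewrite !(dotvDl, dotvDr, dotvNl, dotvNr, dotvZl, dotvZr).
by ring.
Qed.

Lemma concave_dotv u : concave_on_Rd (fun th : 'cV[R]_d => dotv u th).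
Proof. by move=> x y t _ _; rewrite dotvDr !dotvZr. Qed.

Lemma concave_neg_dotv_affine u (Pi : 'M[R]_d) : psd Pi ->
  concave_on_Rd (fun th => - dotv (u + Pi *m th) th).
Proof.
move=> hPi x y t t0 t1.
have gap := quad_form_convex_gap Pi x y t; rewrite /= in gap.
have : 0 <= t * (1 - t) * dotv (Pi *m (x - y)) (x - y).
  by rewrite !mulr_ge0 ?psd_dotv_ge0 ?subr_ge0.
rewrite !dotvDl [dotv u (_ + _)]dotvDr !dotvZr; lra.
Qed.

End InnerProduct.

Lemma convex_noninc_comp_concave {R : realType} {d : nat} {Phi : R -> R}
    {h : 'cV[R]_d -> R} :
  convex_real_fun Phi -> noninc_real_fun Phi -> concave_on_Rd h ->
  convex_on_Rd (fun th => Phi (h th)).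
Proof.
move=> hconv hdec hh x y t t0 t1.
exact: le_trans (hdec _ _ (hh _ _ _ t0 t1)) (hconv _ _ _ t0 t1).
Qed.

Lemma convex_on_Rd_conic {R : realType} (d : nat) (a b : R)
    (f g : 'cV[R]_d -> R) :
  0 <= a -> 0 <= b -> convex_on_Rd f -> convex_on_Rd g ->
  convex_on_Rd (fun th => a * f th + b * g th).
Proof.
move=> a0 b0 cf cg x y t t0 t1.
have := ler_wpM2l a0 (cf x y t t0 t1); have := ler_wpM2l b0 (cg x y t t0 t1).
lra.
Qed.

Lemma convex_on_Rd_Rintegral {dT : measure_display} {T : measurableType dT}
    {R : realType} (P : probability T R) {d : nat} (F : 'cV[R]_d -> T -> R) :
  (forall th, P.-integrable setT (fun w => (F th w)%:E)) ->
  (forall w, convex_on_Rd (fun th => F th w)) ->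
  convex_on_Rd (fun th => Rintegral P setT (F th)).
Proof.
move=> hint hconv x y t t0 t1.
have iZ k th : P.-integrable setT (EFin \o (fun w => k * F th w)).
  apply: (eq_integrable measurableT _ _ _ (integrableZl measurableT k (hint th))).
  by move=> w _ /=; rewrite EFinM.
have iS : P.-integrable setT (EFin \o (fun w => t * F x w + (1 - t) * F y w)).
  apply: (eq_integrable measurableT _ _ _ (integrableD measurableT (iZ t x) (iZ (1 - t) y))).
  by move=> w _ /=; rewrite EFinD.
have ix := hint x; have iy := hint y.
rewrite -RintegralZl // -(RintegralZl (f := F y)) // -RintegralD //.
by apply: le_Rintegral => // [|w _]; [exact: hint | exact: hconv].
Qed.

Theorem theorem2 (dT : measure_display) (T : measurableType dT) (R : realType)
  (P : probability T R) (d : nat) (rho : R) (Phi : R -> R)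
  (U0 U1 : 'I_d -> {RV P >-> R}) (Pi : 'M[R]_d)
  (hrho0 : 0 <= rho) (hrho1 : rho <= 1)
  (hPi : psd Pi) (hconv : convex_real_fun Phi) (hdec : noninc_real_fun Phi)
  (hint1 : forall theta : 'cV[R]_d,
     P.-integrable setT (fun w => (Phi (dotv (rvec U1 w) theta))%:E))
  (hint0 : forall theta : 'cV[R]_d,
     P.-integrable setT
       (fun w => (Phi (- dotv (rvec U0 w + Pi *m theta) theta))%:E)) :
  convex_on_Rd (PR rho Phi U0 U1 Pi).
Proof.
apply: convex_on_Rd_conic; rewrite ?subr_ge0 //.
- apply: (convex_on_Rd_Rintegral P (fun th w => Phi (dotv (rvec U1 w) th))) => // w.
  exact: convex_noninc_comp_concave hconv hdec (concave_dotv _).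
- apply: (convex_on_Rd_Rintegral P
    (fun th w => Phi (- dotv (rvec U0 w + Pi *m th) th))) => // w.
  exact: convex_noninc_comp_concave hconv hdec (concave_neg_dotv_affine (rvec U0 w) Pi hPi).
Qed.
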